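(* Let $u:X\to\mathbb{R}$ be non-constant affine. Let $\succ_{HP}$ be a hope-and-prepare preference with unique representation $(u,C_{HP},D_{HP})$, $\succ_T$ a twofold multiprior preference with unique representation $(u,C_T,D_T)$, and $\succ_B$ a Bewley preference with unique representation $(u,C_B)$. Then: (i) $\succ_B$ is more conservative than $\succ_{HP}$ if and only if $C_{HP}\cup D_{HP}\subseteq C_B$; (ii) $\succ_T$ is more conservative than $\succ_{HP}$ if and only if $C_{HP}\subseteq C_T$ and $D_{HP}\subseteq D_T$.
   Context: $S$ is a set of states with algebra $\Sigma$; $X$ is a non-singleton convex subset of a real vector space; $\mathcal{F}$ is the set of simple acts $f:S\to X$ ($\Sigma$-measurable, finitely many values); $\Delta$ is the set of finitely additive probability measures on $(S,\Sigma)$ with weak* topology. A relation $\succ$ on $\mathcal{F}$ is a hope-and-prepare preference with representation $(u,C,D)$ ($C,D\subseteq\Delta$ convex compact, $C\cap D\ne\emptyset$) if $f\succ g$ iff $\min_{p\in C}\int u(f)dp>\min_{p\in C}\int u(g)dp$ and $\max_{p\in D}\int u(f)dp>\max_{p\in D}\int u(g)dp$. It is a twofold multiprior preference with representation $(u,C,D)$ ($C,D$ convex compact, $C\cap D\ne\emptyset$) if $f\succ g$ iff $\min_{p\in C}\int u(f)dp>\max_{p\in D}\int u(g)dp$. It is a Bewley preference with representation $(u,C)$ ($C$ non-empty convex compact) if $f\succ g$ iff $\int u(f)dp>\int u(g)dp$ for all $p\in C$. ''Unique representation'' means the sets are unique and $u$ is unique up to positive affine transformation. $\succ_1$ is more conservative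 than $\succ_2$ if $f\succ_1 g$ implies $f\succ_2 g$ for all $f,g\in\mathcal{F}$. *)

From HB Require Import structures.
From mathcomp Require Import all_boot all_order all_algebra.
From mathcomp Require Import boolp classical_sets functions cardinality fsbigop reals.
From mathcomp Require Import topology function_spaces normedtype.
Import numFieldNormedType.Exports.
Set Implicit Arguments. Unset Strict Implicit. Unset Printing Implicit Defensive.
Import Order.TTheory GRing.Theory Num.Theory.
Local Open Scope classical_set_scope.
Local Open Scope ring_scope.

Definition is_algebra {S : Type} (Sigma : set (set S)) : Prop :=
  Sigma setT /\ (forall A, Sigma A -> Sigma (~` A)) /\
  (forall A B, Sigma A -> Sigma B -> Sigma (A `|` B)).

Definition convex_subset {R : realType} {V : lmodType R} (X : set V) : Prop :=
  forall (x y : V) (t : R), X x -> X y -> 0 <= t <= 1 -> X (t *: x + (1 - t) *: y).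

Definition non_singleton {T : Type} (X : set T) : Prop :=
  exists x y, X x /\ X y /\ x <> y.

Definition affine_on {R : realType} {V : lmodType R} (X : set V) (u : V -> R) : Prop :=
  forall (x y : V) (t : R), X x -> X y -> 0 <= t <= 1 ->
    u (t *: x + (1 - t) *: y) = t * u x + (1 - t) * u y.

Definition nonconstant_on {R : realType} {V : lmodType R} (X : set V) (u : V -> R) : Prop :=
  exists x y, X x /\ X y /\ u x <> u y.

Definition simple_act {R : realType} {S : Type} {V : lmodType R}
  (Sigma : set (set S)) (X : set V) (f : S -> V) : Prop :=
  (forall s, X (f s)) /\ finite_set (range f) /\ (forall v, Sigma (f @^-1` [set v])).

(* Finitely additive probability measures on (S, Sigma); by convention a
   measure is the function A |-> p A on Sigma, extended by 0 outside Sigma. *)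
Definition fa_prob {R : realType} {S : Type} (Sigma : set (set S)) (p : set S -> R) : Prop :=
  (forall A, ~ Sigma A -> p A = 0) /\
  (forall A, Sigma A -> 0 <= p A) /\
  p setT = 1 /\
  (forall A B, Sigma A -> Sigma B -> A `&` B = set0 -> p (A `|` B) = p A + p B).

Definition sint {R : realType} {S : Type} (p : set S -> R) (h : S -> R) : R :=
  (\sum_(y \in range h) y * p (h @^-1` [set y]))%R.

Definition convex_meas {R : realType} {S : Type} (C : set (set S -> R)) : Prop :=
  forall p q (t : R), C p -> C q -> 0 <= t <= 1 ->
    C (fun A => t * p A + (1 - t) * q A).

(* Weak* topology on Delta = topology of setwise convergence on Sigma,
   i.e. the product (pointwise) topology on set S -> R restricted to Delta. *)
Definition prior_set {R : realType} {S : Type} (Sigma : set (set S))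
  (C : set (set S -> R)) : Prop :=
  C `<=` fa_prob Sigma /\ convex_meas C /\ compact (C : set {ptws set S -> R}).

Definition minE {R : realType} {S : Type} (C : set (set S -> R)) (h : S -> R) : R :=
  inf [set sint p h | p in C].
Definition maxE {R : realType} {S : Type} (C : set (set S -> R)) (h : S -> R) : R :=
  sup [set sint p h | p in C].

Definition pref (S : Type) (V : Type) := (S -> V) -> (S -> V) -> Prop.

Definition HP_rep {R : realType} {S : Type} {V : lmodType R}
  (Sigma : set (set S)) (X : set V) (pr : pref S V)
  (u : V -> R) (C D : set (set S -> R)) : Prop :=
  affine_on X u /\ prior_set Sigma C /\ prior_set Sigma D /\ (C `&` D !=set0) /\
  forall f g, simple_act Sigma X f -> simple_act Sigma X g ->
    (pr f g <-> (minE C (u \o f) > minE C (u \o g) /\ maxE D (u \o f) > maxE D (u \o g))).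

Definition T_rep {R : realType} {S : Type} {V : lmodType R}
  (Sigma : set (set S)) (X : set V) (pr : pref S V)
  (u : V -> R) (C D : set (set S -> R)) : Prop :=
  affine_on X u /\ prior_set Sigma C /\ prior_set Sigma D /\ (C `&` D !=set0) /\
  forall f g, simple_act Sigma X f -> simple_act Sigma X g ->
    (pr f g <-> minE C (u \o f) > maxE D (u \o g)).

Definition B_rep {R : realType} {S : Type} {V : lmodType R}
  (Sigma : set (set S)) (X : set V) (pr : pref S V)
  (u : V -> R) (C : set (set S -> R)) : Prop :=
  affine_on X u /\ prior_set Sigma C /\ (C !=set0) /\
  forall f g, simple_act Sigma X f -> simple_act Sigma X g ->
    (pr f g <-> forall p, C p -> sint p (u \o f) > sint p (u \o g)).

Definition pos_affine_transf {R : realType} {V : lmodType R} (X : set V) (u u' : V -> R) : Prop :=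
  exists a b : R, 0 < a /\ forall x, X x -> u' x = a * u x + b.

Definition unique_HP_rep {R : realType} {S : Type} {V : lmodType R}
  (Sigma : set (set S)) (X : set V) (pr : pref S V)
  (u : V -> R) (C D : set (set S -> R)) : Prop :=
  HP_rep Sigma X pr u C D /\
  forall u' C' D', HP_rep Sigma X pr u' C' D' ->
    C' = C /\ D' = D /\ pos_affine_transf X u u'.

Definition unique_T_rep {R : realType} {S : Type} {V : lmodType R}
  (Sigma : set (set S)) (X : set V) (pr : pref S V)
  (u : V -> R) (C D : set (set S -> R)) : Prop :=
  T_rep Sigma X pr u C D /\
  forall u' C' D', T_rep Sigma X pr u' C' D' ->
    C' = C /\ D' = D /\ pos_affine_transf X u u'.

Definition unique_B_rep {R : realType} {S : Type} {V : lmodType R}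
  (Sigma : set (set S)) (X : set V) (pr : pref S V)
  (u : V -> R) (C : set (set S -> R)) : Prop :=
  B_rep Sigma X pr u C /\
  forall u' C', B_rep Sigma X pr u' C' ->
    C' = C /\ pos_affine_transf X u u'.

Definition more_conservative {R : realType} {S : Type} {V : lmodType R}
  (Sigma : set (set S)) (X : set V) (pr1 pr2 : pref S V) : Prop :=
  forall f g, simple_act Sigma X f -> simple_act Sigma X g -> pr1 f g -> pr2 f g.

(* A prior [p] outside a compact convex set [K] of finitely additive priors
   can be separated from [K] by the expectation of a step function on a finite
   partition of [S]: by compactness finitely many events already tell [p] apart
   from every member of [K], and projecting [p] onto [K] in these finitely many
   coordinates yields a separating linear functional, which lives on the atoms
   generated by the events. Mixing two outcomes of different utility along this
   step function, and along a suitable constant, gives acts [f] and [g] with [g]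
   of constant expected utility, [f] better than [g] under every prior of [K] but
   worse under [p] (or the reverse). A Bewley preference with priors [K], and a
   twofold multiprior one with [K] as its pessimistic (resp. optimistic) set,
   ranks [f] above [g] (resp. [g] above [f]); a hope-and-prepare preference
   whose [C] (resp. [D]) contains [p] does not. This gives the inclusions; the
   converse implications only compare minima and maxima, which are attained
   because expected utility is weak* continuous. *)

From HB Require Import structures.
From mathcomp Require Import all_boot all_order all_algebra.
From mathcomp Require Import boolp classical_sets functions cardinality fsbigop reals.
From mathcomp Require Import topology function_spaces normedtype.
From mathcomp Require Import finmap lra ring.
From mathcomp Require derive.
Import numFieldNormedType.Exports.
Import Order.TTheory GRing.Theory Num.Theory.
Set Implicit Arguments. Unset Strict Implicit. Unset Printing Implicit Defensive.
Local Open Scope classical_set_scope.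
Local Open Scope ring_scope.

Lemma bigcup_fin (T : Type) (I : finType) (P : pred I) (B : I -> set T) :
  \bigcup_(i in [set i | P i]) B i = \big[setU/set0]_(i | P i) B i.
Proof.
have -> : [set i | P i] = [set i | (i \in index_enum I) && P i].
  by apply/seteqP; split => i /=; rewrite mem_index_enum.
exact: bigcup_seq_cond.
Qed.

Section FinitelyAdditive.
Variables (R : realType) (S : Type) (Sigma : set (set S)).
Hypothesis hSigma : is_algebra Sigma.

Lemma algebra_set0 : Sigma set0.
Proof. by case: hSigma => hT [hC _]; rewrite -setCT; exact: hC. Qed.

Lemma algebra_setI A B : Sigma A -> Sigma B -> Sigma (A `&` B).
Proof.
case: hSigma => _ [hC hU] hA hB; rewrite -[A `&` B]setCK setCI.
by apply/hC/hU; exact: hC.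
Qed.

Lemma algebra_bigsetU (I : Type) (r : seq I) (P : pred I) (B : I -> set S) :
  (forall i, Sigma (B i)) -> Sigma (\big[setU/set0]_(i <- r | P i) B i).
Proof.
case: hSigma => _ [_ hU] hB.
by apply: (big_ind Sigma) => //; exact: algebra_set0.
Qed.

Lemma algebra_bigsetI (I : Type) (r : seq I) (P : pred I) (B : I -> set S) :
  (forall i, Sigma (B i)) -> Sigma (\big[setI/setT]_(i <- r | P i) B i).
Proof.
by move=> hB; apply: (big_ind Sigma) => //; [case: hSigma | exact: algebra_setI].
Qed.

Variable q : set S -> R.
Hypothesis hq : fa_prob Sigma q.

Lemma fa_prob_set0 : q set0 = 0.
Proof.
case: hq => _ [_ [_ hadd]].
have := hadd _ _ algebra_set0 algebra_set0 (setI0 _); rewrite setU0; lra.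
Qed.

Lemma fa_prob_ge0 A : 0 <= q A.
Proof.
case: hq => [q0 [qge0 _]]; have [/qge0 //|nA] := pselect (Sigma A).
by rewrite q0.
Qed.

Lemma fa_prob_bigsetU (I : choiceType) (r : seq I) (P : pred I) (B : I -> set S) :
  uniq r -> (forall i, Sigma (B i)) -> trivIset setT B ->
  q (\big[setU/set0]_(i <- r | P i) B i) = \sum_(i <- r | P i) q (B i).
Proof.
move=> + hB tB; elim: r => [_|a r IHr /= /andP[ar ur]].
  by rewrite !big_nil fa_prob_set0.
rewrite !big_cons; case: ifP => Pa; last exact: IHr.
case: hq => _ [_ [_ hadd]]; rewrite hadd ?IHr //; first exact: algebra_bigsetU.
rewrite -bigcup_seq_cond setI_bigcupr; apply: bigcup0 => i /andP[ir _].
apply/eqP; apply: contraT => /set0P /(tB a i Logic.I Logic.I) ai.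
by rewrite ai ir in ar.
Qed.

Definition is_partition (I : finType) (B : I -> set S) :=
  [/\ forall i, Sigma (B i), \bigcup_i B i = setT & trivIset setT B].

Definition step_expect (I : finType) (B : I -> set S) (v : I -> R) :=
  \sum_i v i * q (B i).

Section Partition.
Variables (I : finType) (B : I -> set S).
Hypothesis hB : is_partition B.

Lemma partition_cover s : exists i, B i s.
Proof.
case: hB => _ covB _; have : (\bigcup_i B i) s by rewrite covB.
by case=> i _ Bis; exists i.
Qed.

Lemma fa_prob_partition_sum (P : pred I) :
  q (\bigcup_(i in [set i | P i]) B i) = \sum_(i | P i) q (B i).
Proof.
case: hB => SB _ tB.
by rewrite bigcup_fin fa_prob_bigsetU //; exact: index_enum_uniq.
Qed.

Lemma fa_prob_partition_sum1 : \sum_i q (B i) = 1.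
Proof.
rewrite -fa_prob_partition_sum; case: hq => _ [_ [<- _]]; congr q.
by apply/seteqP; split => // s _; have [i Bis] := partition_cover s; exists i.
Qed.

Lemma sint_step (h : S -> R) (v : I -> R) :
  (forall i s, B i s -> h s = v i) -> sint q h = step_expect B v.
Proof.
move=> hv; have finh : finite_set (range h).
  apply: sub_finite_set (finite_image v (@finite_finset _ setT)) => _ [s _ <-].
  by have [i Bis] := partition_cover s; exists i; rewrite // (hv i s Bis).
have preimE y : q (h @^-1` [set y]) = \sum_(i | y == v i) q (B i).
  rewrite -fa_prob_partition_sum; congr q; apply/seteqP; split => s /=.
  - by move=> <-; have [i Bis] := partition_cover s; exists i; rewrite //= (hv i s Bis).
  - by case=> i /= /eqP -> Bis; rewrite (hv i s Bis).
rewrite /sint fsbig_finite //=.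
transitivity (\sum_(y <- fset_set (range h)) \sum_i
                 (if y == v i then v i * q (B i) else 0)).
  apply: eq_bigr => y _; rewrite preimE mulr_sumr big_mkcond.
  by apply: eq_bigr => i _; case: eqP => // ->.
rewrite exchange_big; apply: eq_bigr => i _ /=.
have [[s Bis]|B0] := pselect (B i !=set0).
  have vih : v i \in fset_set (range h).
    by rewrite in_fset_set //; apply/mem_set; exists s; rewrite // (hv i s Bis).
  rewrite (bigD1_seq (v i)) ?fset_uniq //= eqxx big1 ?addr0 // => y.
  by move=> /negbTE ->.
have -> : B i = set0 by apply/seteqP; split => // s Bis; apply: B0; exists s.
by rewrite fa_prob_set0 mulr0; apply: big1 => y _; case: ifP.
Qed.

Lemma step_expect_affine (a b : R) (v : I -> R) :
  step_expect B (fun i => a + b * v i) = a + b * step_expect B v.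
Proof.
rewrite /step_expect.
under eq_bigr do rewrite mulrDl -mulrA.
by rewrite big_split -!mulr_sumr fa_prob_partition_sum1 mulr1.
Qed.

Lemma step_expect_cst (c : R) : step_expect B (fun=> c) = c.
Proof. by rewrite /step_expect -mulr_sumr fa_prob_partition_sum1 mulr1. Qed.

Lemma step_expect_bounds (v : I -> R) :
  (forall i, 0 <= v i <= 1) -> 0 <= step_expect B v <= 1.
Proof.
move=> v01; apply/andP; split.
  by apply: sumr_ge0 => i _; rewrite mulr_ge0 ?fa_prob_ge0 //; case/andP: (v01 i).
rewrite -fa_prob_partition_sum1; apply: ler_sum => i _.
by rewrite ler_piMl ?fa_prob_ge0 //; case/andP: (v01 i).
Qed.

End Partition.

End FinitelyAdditive.

Section Extrema.
Variables (R : realType) (S : Type).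

Lemma sint_continuous (h : S -> R) : finite_set (range h) ->
  continuous (fun q : {ptws set S -> R} => sint q h).
Proof.
move=> finh; rewrite /sint.
under [X in continuous X]funext do rewrite fsbig_finite //.
apply: continuous_big => [|y _]; first exact: add_continuous.
move=> q; apply: continuousM; first exact: cst_continuous.
exact: (@proj_continuous (set S) (fun _ => R)).
Qed.

Variables (K : set {ptws set S -> R}) (h : S -> R).
Hypotheses (Kne : K !=set0) (Kcompact : compact K) (finh : finite_set (range h)).

Lemma sint_min_attained :
  exists2 q0, K q0 & forall q, K q -> sint q0 h <= sint q h.
Proof.
have [q0 /set_mem Kq0 q0min] := derive.compact_EVT_min Kne Kcompact
  (continuous_subspaceT (sint_continuous finh)).
by exists q0 => // q /mem_set; exact: q0min.
Qed.

Lemma sint_max_attained :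
  exists2 q0, K q0 & forall q, K q -> sint q h <= sint q0 h.
Proof.
have [q0 /set_mem Kq0 q0max] := derive.compact_EVT_max Kne Kcompact
  (continuous_subspaceT (sint_continuous finh)).
by exists q0 => // q /mem_set; exact: q0max.
Qed.

Lemma minE_le q : K q -> minE K h <= sint q h.
Proof.
move=> Kq; have [q0 _ q0min] := sint_min_attained.
by apply: ge_inf; [exists (sint q0 h) => _ [p Kp <-]; exact: q0min | exists q].
Qed.

Lemma minE_attained : exists2 q0, K q0 & minE K h = sint q0 h.
Proof.
have [q0 Kq0 q0min] := sint_min_attained; exists q0 => //.
apply/le_anti; rewrite minE_le // lb_le_inf //; first by exists (sint q0 h), q0.
by move=> _ [q Kq <-]; exact: q0min.
Qed.

Lemma maxE_ge q : K q -> sint q h <= maxE K h.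
Proof.
move=> Kq; have [q0 _ q0max] := sint_max_attained.
apply: sup_upper_bound; last by exists q.
by split; [exists (sint q h), q | exists (sint q0 h) => _ [p Kp <-]; exact: q0max].
Qed.

Lemma maxE_attained : exists2 q0, K q0 & maxE K h = sint q0 h.
Proof.
have [q0 Kq0 q0max] := sint_max_attained; exists q0 => //.
apply/le_anti; rewrite maxE_ge // andbT ge_sup //; first by exists (sint q0 h), q0.
by move=> _ [q Kq <-]; exact: q0max.
Qed.

End Extrema.

Lemma ge0_of_perturbation (R : realFieldType) (x y : R) :
  (forall t, 0 < t <= 1 -> 0 <= x + t * y) -> 0 <= x.
Proof.
move=> hxy; rewrite leNgt; apply/negP => x_lt0.
have y1_gt0 : 0 < `|y| + 1 by rewrite ltr_wpDl.
pose t := Num.min 1 (- x / (`|y| + 1)).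
have t_gt0 : 0 < t by rewrite lt_min ltr01 divr_gt0 // oppr_gt0.
have : t * (`|y| + 1) <= - x by rewrite -ler_pdivlMr // ge_min lexx orbT.
have : t * y <= t * `|y| by apply: ler_wpM2l; [exact: ltW | exact: ler_norm].
have := hxy t; rewrite t_gt0 ge_min lexx /= mulrDr mulr1 => /(_ isT).
lra.
Qed.

Lemma affine_rescale_unit (R : realFieldType) (I : finType) (w : I -> R) :
  exists a b, 0 < b /\ forall i, 0 <= a + b * w i <= 1.
Proof.
pose M := \sum_i `|w i|.
have wM i : `|w i| <= M.
  by rewrite /M (bigD1 i) //= lerDl sumr_ge0.
have M_ge0 : 0 <= M by rewrite sumr_ge0.
exists (M / (2 * M + 1)), (2 * M + 1)^-1; split; first by rewrite invr_gt0; lra.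
move=> i; rewrite [_^-1 * w i]mulrC -mulrDl.
have := wM i; rewrite ler_norml => /andP[wlo whi].
by rewrite divr_ge0 ?ler_pdivrMr /=; lra.
Qed.

(* Needed for [compact_cover], which is stated for pointed spaces. *)
HB.instance Definition _ (S : Type) (R : realType) :=
  isPointed.Build {ptws set S -> R} (fun _ => 0).

Section Separation.
Variables (R : realType) (S : Type) (Sigma : set (set S)).
Hypothesis hSigma : is_algebra Sigma.

Lemma fa_prob_neq (p q : set S -> R) : fa_prob Sigma p -> fa_prob Sigma q -> q <> p ->
  exists2 A, Sigma A & q A != p A.
Proof.
move=> [p0 _] [q0 _] qp; have [A qpA] : exists A, q A != p A.
  apply: contrapT => nA; apply/qp/funext => A; apply/eqP.
  by apply: contrapT => qpA; apply: nA; exists A; apply/negP.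
exists A => //; apply: contrapT => SA; by rewrite p0 // q0 // eqxx in qpA.
Qed.

Lemma finite_separating_family (K : set {ptws set S -> R}) p :
  compact K -> K `<=` fa_prob Sigma -> fa_prob Sigma p -> ~ K p ->
  exists (I : finType) (A : I -> set S),
    (forall i, Sigma (A i)) /\ (forall q, K q -> exists i, q (A i) != p (A i)).
Proof.
move=> Kc Kfa hp nKp.
have /choice[Aq hAq] q : exists A, K q -> Sigma A /\ q A != p A.
  have [Kq|nKq] := pselect (K q); last by exists set0 => /nKq.
  have [|A SA qpA] := fa_prob_neq hp (Kfa q Kq); first by move=> qp; rewrite qp in Kq.
  by exists A.
pose U q := [set r : {ptws set S -> R} | r (Aq q) != p (Aq q)].
have Uopen q : K q -> open (U q).
  move=> _; apply: (@open_comp _ _ (fun r : {ptws set S -> R} => r (Aq q))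
    [set x | x != p (Aq q)]); last exact: open_neq.
  by move=> r _; exact: (@proj_continuous (set S) (fun _ => R)).
have KU : K `<=` cover K U by move=> q Kq; exists q => //; have [] := hAq q Kq.
move: Kc; rewrite compact_cover => /(_ _ K U Uopen KU)[D DK KD].
exists D, (fun i => Aq (val i)); split.
  by move=> [q qD] /=; have [] := hAq q (set_mem (DK q qD)).
by move=> q /KD [r rD qr]; exists [` rD]%fset.
Qed.

Section Atoms.
Variables (I : finType) (A : I -> set S).
Hypothesis SA : forall i, Sigma (A i).

Definition pattern (s : S) : {ffun I -> bool} := [ffun i => `[< A i s >]].

Lemma pattern_partition : is_partition Sigma (fun sg => pattern @^-1` [set sg]).
Proof.
split.
- move=> sg; have -> : pattern @^-1` [set sg] =
      \big[setI/setT]_(i <- index_enum I) (if sg i then A i else ~` A i).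
    rewrite -bigcap_seq; apply/seteqP; split => s /=.
      by move=> <- i _; rewrite ffunE; case: asboolP.
    move=> hs; apply/ffunP => i; rewrite ffunE.
    by move: (hs i (mem_index_enum i)); case: (sg i) => [/asboolT|/asboolF].
  apply: algebra_bigsetI => // i; case: (sg i) => //.
  by case: hSigma => _ [hC _]; exact: hC.
- by apply/seteqP; split => // s _; exists (pattern s).
- by move=> sg tau _ _ [s /= [<- <-]].
Qed.

Lemma lincomb_step_expect (q : set S -> R) (c : I -> R) : fa_prob Sigma q ->
  \sum_i c i * q (A i) =
  step_expect q (fun sg => pattern @^-1` [set sg]) (fun sg => \sum_i c i * (sg i)%:R).
Proof.
move=> hq; rewrite /step_expect; under [RHS]eq_bigr do rewrite mulr_suml.
rewrite exchange_big /=; apply: eq_bigr => i _.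
under eq_bigr do rewrite -mulrA.
rewrite -mulr_sumr; congr (_ * _).
have -> : A i =
    \bigcup_(sg in [set sg : {ffun I -> bool} | sg i]) pattern @^-1` [set sg].
  apply/seteqP; split => s /=.
    by move=> Ais; exists (pattern s) => //=; rewrite ffunE; exact/asboolP.
  by case=> sg /= sgi sgE; move: sgi; rewrite -sgE ffunE => /asboolP.
rewrite (fa_prob_partition_sum hSigma hq pattern_partition (fun sg => sg i)).
rewrite big_mkcond /=.
by apply: eq_bigr => sg _; case: (sg i); rewrite ?mul1r ?mul0r.
Qed.

End Atoms.

Lemma separating_lincomb (I : finType) (A : I -> set S) (K : set {ptws set S -> R}) p :
  K !=set0 -> compact K -> convex_meas K ->
  (forall q, K q -> exists i, q (A i) != p (A i)) ->
  exists c : I -> R, exists2 d, 0 < d &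
    forall q, K q -> \sum_i c i * p (A i) + d <= \sum_i c i * q (A i).
Proof.
move=> Kne Kc Kconv sepA.
pose F (q : {ptws set S -> R}) := \sum_i (q (A i) - p (A i)) ^+ 2.
have Fcont : continuous F.
  have -> : F = fun q => \sum_i (q (A i) - p (A i)) * (q (A i) - p (A i)).
    by apply/funext => q; apply: eq_bigr => i _; rewrite expr2.
  apply: continuous_big => [|i _ q]; first exact: add_continuous.
  have Ai_cont : {for q, continuous (fun r : {ptws set S -> R} => r (A i) - p (A i))}.
    apply: continuousB; last exact: cst_continuous.
    exact: (@proj_continuous (set S) (fun _ => R)).
  exact: (@continuousM R _ _ _ q Ai_cont Ai_cont).
have [q0 /set_mem Kq0 q0min] :=
  derive.compact_EVT_min Kne Kc (continuous_subspaceT Fcont).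
(* [q0] is the point of [K] nearest to [p] in the coordinates [A i], so [K]
   lies beyond the hyperplane through [q0] with normal [q0 - p]. *)
pose c i := q0 (A i) - p (A i).
exists c, (F q0).
  have [i q0i] := sepA q0 Kq0; rewrite /F (bigD1 i) //=.
  have : 0 < (q0 (A i) - p (A i)) ^+ 2 by rewrite exprn_even_gt0 //= subr_eq0.
  have : 0 <= \sum_(j | j != i) (q0 (A j) - p (A j)) ^+ 2.
    by apply: sumr_ge0 => j _; exact: sqr_ge0.
  lra.
move=> q Kq; pose a i := q (A i) - q0 (A i).
have variation t : 0 < t <= 1 -> 0 <= 2 * \sum_i c i * a i + t * \sum_i a i ^+ 2.
  move=> /andP[t_gt0 t_le1]; pose qt E := t * q E + (1 - t) * q0 E.
  have Kqt : K qt by apply: Kconv; rewrite // ltW.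
  have : F q0 <= F qt by exact: q0min (mem_set Kqt).
  have -> : F qt = F q0 + t * (2 * \sum_i c i * a i + t * \sum_i a i ^+ 2).
    rewrite /F mulrDr !mulrA !mulr_sumr -!big_split /=; apply: eq_bigr => i _.
    by rewrite /qt /c /a; ring.
  by rewrite lerDl pmulr_rge0.
have := ge0_of_perturbation variation; rewrite pmulr_rge0 // => ca_ge0.
rewrite -subr_ge0.
suff -> : \sum_i c i * q (A i) - (\sum_i c i * p (A i) + F q0) = \sum_i c i * a i by [].
rewrite opprD addrA -sumrB /F -sumrB; apply: eq_bigr => i _; rewrite /c /a; ring.
Qed.

Lemma separating_step_function (K : set {ptws set S -> R}) p :
  prior_set Sigma K -> K !=set0 -> fa_prob Sigma p -> ~ K p ->
  exists (I : finType) (B : I -> set S) (v : I -> R) (c : R),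
  [/\ is_partition Sigma B, forall i, 0 <= v i <= 1, 0 <= c <= 1,
      step_expect p B v < c & forall q, K q -> c < step_expect q B v].
Proof.
move=> [Kfa [Kconv Kc]] Kne hp nKp.
have [I [A [SA sepA]]] := finite_separating_family Kc Kfa hp nKp.
have [cA [d d_gt0 sepL]] := separating_lincomb Kne Kc Kconv sepA.
pose B sg := pattern A @^-1` [set sg].
have hB : is_partition Sigma B := pattern_partition SA.
pose w (sg : {ffun I -> bool}) := \sum_i cA i * (sg i)%:R.
have [a [b [b_gt0 v01]]] := affine_rescale_unit w.
pose v sg := a + b * w sg.
have vE q : fa_prob Sigma q -> step_expect q B v = a + b * \sum_i cA i * q (A i).
  by move=> hq; rewrite (step_expect_affine hSigma hq hB) (lincomb_step_expect SA).
have gap q : K q -> step_expect p B v + b * d <= step_expect q B v.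
  move=> Kq; rewrite vE // (vE q (Kfa q Kq)).
  by have := sepL q Kq; rewrite -(ler_pM2l b_gt0) mulrDr; lra.
have bd_gt0 : 0 < b * d by exact: mulr_gt0.
have [q1 Kq1] := Kne.
exists {ffun I -> bool}, B, v, (step_expect p B v + b * d / 2); split => //.
- have := step_expect_bounds hSigma hp hB v01.
  have := step_expect_bounds hSigma (Kfa q1 Kq1) hB v01.
  have := gap q1 Kq1; lra.
- lra.
- by move=> q /gap; lra.
Qed.

End Separation.

Section Acts.
Variables (R : realType) (S : Type) (Sigma : set (set S)).
Variables (V : lmodType R) (X : set V) (u : V -> R).
Hypotheses (hSigma : is_algebra Sigma) (hXc : convex_subset X) (hu : affine_on X u).

Lemma simple_act_finite f : simple_act Sigma X f -> finite_set (range (u \o f)).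
Proof.
case=> _ [finf _]; apply: sub_finite_set (finite_image u finf) => _ [s _ <-].
by exists (f s).
Qed.

Lemma act_of_step (x0 y0 : V) (I : finType) (B : I -> set S) (v : I -> R) :
  X x0 -> X y0 -> is_partition Sigma B -> (forall i, 0 <= v i <= 1) ->
  exists2 f, simple_act Sigma X f & forall q, fa_prob Sigma q ->
    sint q (u \o f) = u x0 + (u y0 - u x0) * step_expect q B v.
Proof.
move=> Xx0 Xy0 hB v01; have [SB _ tB] := hB.
pose mix t := t *: y0 + (1 - t) *: x0.
pose w s := \sum_i (if `[< B i s >] then v i else 0).
have wB i s : B i s -> w s = v i.
  move=> Bis; rewrite /w (bigD1 i) //= asboolT // big1 ?addr0 // => j ji.
  by rewrite asboolF // => Bjs; move/eqP: ji; apply; apply: tB => //; exists s.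
have fB i s : B i s -> (mix \o w) s = mix (v i) by move=> /wB /= ->.
exists (mix \o w); first split.
- by move=> s; have [i /fB ->] := partition_cover hB s; exact: hXc.
- split.
    apply: sub_finite_set (finite_image (mix \o v) (@finite_finset _ setT)).
    by move=> _ [s _ <-]; have [i /fB ->] := partition_cover hB s; exists i.
  move=> z; have -> : (mix \o w) @^-1` [set z] =
      \bigcup_(i in [set i | mix (v i) == z]) B i.
    apply/seteqP; split => s /=.
      move=> fsz; have [i Bis] := partition_cover hB s.
      by exists i; rewrite //= -fsz (wB i s Bis).
    by case=> i /= /eqP <- /fB.
  by rewrite bigcup_fin; exact: algebra_bigsetU.
move=> q hq; rewrite -(step_expect_affine hSigma hq hB).
apply: (sint_step hSigma hq hB) => i s /fB /= ->.
by rewrite hu //; lra.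
Qed.

Hypothesis hunc : nonconstant_on X u.

Lemma nonconstant_lt : exists x0 y0, [/\ X x0, X y0 & u x0 < u y0].
Proof.
have [x [y [Xx [Xy /eqP]]]] := hunc; rewrite neq_lt => /orP[uxy|uyx].
- by exists x, y.
- by exists y, x.
Qed.

Lemma separating_acts_below (K : set {ptws set S -> R}) p :
  prior_set Sigma K -> K !=set0 -> fa_prob Sigma p -> ~ K p ->
  exists f g c, [/\ simple_act Sigma X f, simple_act Sigma X g,
    forall q, fa_prob Sigma q -> sint q (u \o g) = c,
    sint p (u \o f) < c & forall q, K q -> c < sint q (u \o f)].
Proof.
move=> hK Kne hp nKp; have Kfa := hK.1.
have [I [B [v [c [hB v01 c01 pc Kc]]]]] :=
  separating_step_function hSigma hK Kne hp nKp.
have [x0 [y0 [Xx0 Xy0 ult]]] := nonconstant_lt.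
have [f hf fE] := act_of_step Xx0 Xy0 hB v01.
have [g hg gE] := act_of_step Xx0 Xy0 hB (fun=> c01).
exists f, g, (u x0 + (u y0 - u x0) * c); split => //.
- by move=> q hq; rewrite gE // (step_expect_cst hSigma hq hB).
- by rewrite fE // ltrD2l ltr_pM2l ?subr_gt0 //; exact: pc.
- by move=> q Kq; rewrite (fE q (Kfa q Kq)) ltrD2l ltr_pM2l ?subr_gt0 //; exact: Kc.
Qed.

Lemma separating_acts_above (K : set {ptws set S -> R}) p :
  prior_set Sigma K -> K !=set0 -> fa_prob Sigma p -> ~ K p ->
  exists f g c, [/\ simple_act Sigma X f, simple_act Sigma X g,
    forall q, fa_prob Sigma q -> sint q (u \o g) = c,
    c < sint p (u \o f) & forall q, K q -> sint q (u \o f) < c].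
Proof.
move=> hK Kne hp nKp; have Kfa := hK.1.
have [I [B [v [c [hB v01 c01 pc Kc]]]]] :=
  separating_step_function hSigma hK Kne hp nKp.
have [x0 [y0 [Xx0 Xy0 ult]]] := nonconstant_lt.
have [f hf fE] := act_of_step Xy0 Xx0 hB v01.
have [g hg gE] := act_of_step Xy0 Xx0 hB (fun=> c01).
exists f, g, (u y0 + (u x0 - u y0) * c); split => //.
- by move=> q hq; rewrite gE // (step_expect_cst hSigma hq hB).
- by rewrite fE // ltrD2l ltr_nM2l ?subr_lt0 //; exact: pc.
- by move=> q Kq; rewrite (fE q (Kfa q Kq)) ltrD2l ltr_nM2l ?subr_lt0 //; exact: Kc.
Qed.

Definition dominates_constants (pr : pref S V) (K : set (set S -> R)) :=
  forall f g c, simple_act Sigma X f -> simple_act Sigma X g ->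
    (forall q, fa_prob Sigma q -> sint q (u \o g) = c) ->
    (forall q, K q -> c < sint q (u \o f)) -> pr f g.

Definition dominated_by_constants (pr : pref S V) (K : set (set S -> R)) :=
  forall f g c, simple_act Sigma X f -> simple_act Sigma X g ->
    (forall q, fa_prob Sigma q -> sint q (u \o g) = c) ->
    (forall q, K q -> sint q (u \o f) < c) -> pr g f.

Lemma HP_rep_C_sub_of_dominates (prHP pr : pref S V) C D K :
  HP_rep Sigma X prHP u C D -> more_conservative Sigma X pr prHP ->
  prior_set Sigma K -> K !=set0 -> dominates_constants pr K -> C `<=` K.
Proof.
move=> [_ [hC [_ [[r [Cr _]] prHPE]]]] cons hK Kne domK p Cp; apply: contrapT => nKp.
have [f [g [c [hf hg gE fp fK]]]] := separating_acts_below hK Kne (hC.1 p Cp) nKp.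
have [+ _] := (prHPE f g hf hg).1 (cons f g hf hg (domK f g c hf hg gE fK)).
have [q0 Cq0 ->] := minE_attained (ex_intro _ r Cr) hC.2.2 (simple_act_finite hg).
rewrite gE; last exact: hC.1.
have := minE_le (ex_intro _ r Cr) hC.2.2 (simple_act_finite hf) Cp.
lra.
Qed.

Lemma HP_rep_D_sub_of_dominated (prHP pr : pref S V) C D K :
  HP_rep Sigma X prHP u C D -> more_conservative Sigma X pr prHP ->
  prior_set Sigma K -> K !=set0 -> dominated_by_constants pr K -> D `<=` K.
Proof.
move=> [_ [_ [hD [[r [_ Dr]] prHPE]]]] cons hK Kne domK p Dp; apply: contrapT => nKp.
have [f [g [c [hf hg gE fp fK]]]] := separating_acts_above hK Kne (hD.1 p Dp) nKp.
have [_] := (prHPE g f hg hf).1 (cons g f hg hf (domK f g c hf hg gE fK)).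
have [q0 Dq0 ->] := maxE_attained (ex_intro _ r Dr) hD.2.2 (simple_act_finite hg).
rewrite gE; last exact: hD.1.
have := maxE_ge (ex_intro _ r Dr) hD.2.2 (simple_act_finite hf) Dp.
lra.
Qed.

End Acts.

Section Representations.
Variables (R : realType) (S : Type) (Sigma : set (set S)).
Variables (V : lmodType R) (X : set V) (u : V -> R).

Lemma B_rep_dominates_constants (prB : pref S V) CB :
  B_rep Sigma X prB u CB -> dominates_constants Sigma X u prB CB.
Proof.
move=> [_ [hCB [_ prBE]]] f g c hf hg gE fK; apply/prBE => // q CBq.
by rewrite gE ?fK //; exact: hCB.1.
Qed.

Lemma B_rep_dominated_by_constants (prB : pref S V) CB :
  B_rep Sigma X prB u CB -> dominated_by_constants Sigma X u prB CB.
Proof.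
move=> [_ [hCB [_ prBE]]] f g c hf hg gE fK; apply/prBE => // q CBq.
by rewrite gE ?fK //; exact: hCB.1.
Qed.

Lemma T_rep_dominates_constants (prT : pref S V) C D :
  T_rep Sigma X prT u C D -> dominates_constants Sigma X u prT C.
Proof.
move=> [_ [hC [hD [[r [Cr Dr]] prTE]]]] f g c hf hg gE fC; apply/prTE => //.
have [q0 Cq0 ->] := minE_attained (ex_intro _ r Cr) hC.2.2 (simple_act_finite u hf).
have [q1 Dq1 ->] := maxE_attained (ex_intro _ r Dr) hD.2.2 (simple_act_finite u hg).
by rewrite gE ?fC //; exact: hD.1.
Qed.

Lemma T_rep_dominated_by_constants (prT : pref S V) C D :
  T_rep Sigma X prT u C D -> dominated_by_constants Sigma X u prT D.
Proof.
move=> [_ [hC [hD [[r [Cr Dr]] prTE]]]] f g c hf hg gE fD; apply/prTE => //.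
have [q0 Cq0 ->] := minE_attained (ex_intro _ r Cr) hC.2.2 (simple_act_finite u hg).
have [q1 Dq1 ->] := maxE_attained (ex_intro _ r Dr) hD.2.2 (simple_act_finite u hf).
by rewrite gE ?fD //; exact: hC.1.
Qed.

Lemma B_rep_more_conservative_HP (prB prHP : pref S V) CB C D :
  B_rep Sigma X prB u CB -> HP_rep Sigma X prHP u C D -> C `|` D `<=` CB ->
  more_conservative Sigma X prB prHP.
Proof.
move=> [_ [_ [_ prBE]]] [_ [hC [hD [[r [Cr Dr]] prHPE]]]] CDsub f g hf hg.
move=> /(prBE f g hf hg) fg; apply/prHPE => //; split.
- have [q0 Cq0 ->] := minE_attained (ex_intro _ r Cr) hC.2.2 (simple_act_finite u hf).
  have := fg q0 (CDsub q0 (or_introl Cq0)).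
  have := minE_le (ex_intro _ r Cr) hC.2.2 (simple_act_finite u hg) Cq0; lra.
- have [q1 Dq1 ->] := maxE_attained (ex_intro _ r Dr) hD.2.2 (simple_act_finite u hg).
  have := fg q1 (CDsub q1 (or_intror Dq1)).
  have := maxE_ge (ex_intro _ r Dr) hD.2.2 (simple_act_finite u hf) Dq1; lra.
Qed.

Lemma T_rep_more_conservative_HP (prT prHP : pref S V) CT DT C D :
  T_rep Sigma X prT u CT DT -> HP_rep Sigma X prHP u C D -> C `<=` CT -> D `<=` DT ->
  more_conservative Sigma X prT prHP.
Proof.
move=> [_ [hCT [hDT [[r' [CTr' DTr']] prTE]]]] [_ [hC [hD [[r [Cr Dr]] prHPE]]]].
move=> CCT DDT f g hf hg /(prTE f g hf hg) fg; apply/prHPE => //.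
have [finf fing] := (simple_act_finite u hf, simple_act_finite u hg).
have CTne : CT !=set0 by exists r'.
have DTne : DT !=set0 by exists r'.
have CTf q : C q -> minE CT (u \o f) <= sint q (u \o f).
  by move=> Cq; have := minE_le CTne hCT.2.2 finf (CCT q Cq).
have DTg q : D q -> sint q (u \o g) <= maxE DT (u \o g).
  by move=> Dq; have := maxE_ge DTne hDT.2.2 fing (DDT q Dq).
have := CTf r Cr; have := DTg r Dr; split.
- have [q0 Cq0 ->] := minE_attained (ex_intro _ r Cr) hC.2.2 finf.
  have := CTf q0 Cq0; have := minE_le (ex_intro _ r Cr) hC.2.2 fing Cr; lra.
- have [q1 Dq1 ->] := maxE_attained (ex_intro _ r Dr) hD.2.2 fing.
  have := DTg q1 Dq1; have := maxE_ge (ex_intro _ r Dr) hD.2.2 finf Dr; lra.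
Qed.

End Representations.


Theorem proposition1 (R : realType) (S : Type) (Sigma : set (set S))
  (hSigma : is_algebra Sigma)
  (V : lmodType R) (X : set V) (hXc : convex_subset X) (hXns : non_singleton X)
  (u : V -> R) (hu : affine_on X u) (hunc : nonconstant_on X u)
  (prHP prT prB : pref S V)
  (CHP DHP CT DT CB : set (set S -> R))
  (hHP : unique_HP_rep Sigma X prHP u CHP DHP)
  (hT : unique_T_rep Sigma X prT u CT DT)
  (hB : unique_B_rep Sigma X prB u CB) :
  (more_conservative Sigma X prB prHP <-> CHP `|` DHP `<=` CB) /\
  (more_conservative Sigma X prT prHP <-> (CHP `<=` CT /\ DHP `<=` DT)).
Proof.
have [hHPrep _] := hHP; have [hTrep _] := hT; have [hBrep _] := hB.
have [_ [hCB [CBne _]]] := hBrep.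
have [_ [hCT [hDT [[r [CTr DTr]] _]]]] := hTrep.
have C_sub := HP_rep_C_sub_of_dominates hSigma hXc hu hunc hHPrep.
have D_sub := HP_rep_D_sub_of_dominated hSigma hXc hu hunc hHPrep.
split; split.
- move=> cons p [Cp|Dp].
  + exact: C_sub cons hCB CBne (B_rep_dominates_constants hBrep) p Cp.
  + exact: D_sub cons hCB CBne (B_rep_dominated_by_constants hBrep) p Dp.
- exact: B_rep_more_conservative_HP hBrep hHPrep.
- move=> cons; split.
  + exact: C_sub cons hCT (ex_intro _ r CTr) (T_rep_dominates_constants hTrep).
  + exact: D_sub cons hDT (ex_intro _ r DTr) (T_rep_dominated_by_constants hTrep).
- by case=> CHPsub DHPsub; exact: T_rep_more_conservative_HP hTrep hHPrep CHPsub DHPsub.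
Qed.
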